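(* For integers $N\ge1$, $m,n$: $$\tau^{m,n}_N(t)=\prod_{k=1}^{N-1}\Big(\frac{q^{n+k-1}b_3}{q^{n+k-1}b_3-1}\Big)^{N-k}\det\big[\widetilde\Psi_{m,n}(t),\widetilde\Psi_{m,n}(qt),\dots,\widetilde\Psi_{m,n}(q^{N-1}t)\big]$$ $$=\prod_{k=1}^{N-1}\Big(\frac{q^{m-k+1}b_1}{q^{m-k+1}b_1-1}\Big)^{N-k}\det\big[\check\Psi_{m,n}(t),\check\Psi_{m,n+1}(t),\dots,\check\Psi_{m,n+N-1}(t)\big]$$ $$=(-1)^{N(N-1)/2}\prod_{k=1}^{N-1}(q^{n+k-1}b_3)^{N-k}\prod_{k=1}^{N-1}\Big(\frac{q^{m-k+1}b_1}{q^{m-k+1}b_1-1}\Big)^{N-k}\det\big[\widehat\Psi_{m,n}(t),\widehat\Psi_{m,n+1}(q^{-1}t),\dots,\widehat\Psi_{m,n+N-1}(q^{-N+1}t)\big].$$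
   Context: $q$ is a fixed nonzero complex constant (generic), $b_1,b_3$ generic parameters with $q^jb_1\neq1$, $q^jb_3\ne1$ for all integers $j$. $\psi(t,b_1,b_3)$ is a function of three variables satisfying, for all values of its arguments: (R1) $\psi(qt,b_1,b_3)=b_1\psi(t,b_1,b_3)+(1-b_1)\psi(qt,b_1/q,b_3)$, (R2) $b_3\psi(qt,b_1,b_3)=\psi(t,b_1,b_3)+(b_3-1)\psi(t,b_1,qb_3)$, (R3) $qtb_1b_3\psi(qt,b_1,b_3)=(qtb_1-1)\psi(t,b_1,b_3)+\psi(t,qb_1,b_3)$, (R4) $qt\psi(qt,b_1,b_3)=(qtb_1-1)\psi(t,b_1,b_3)+\psi(qt,b_1,b_3/q)$. $\tau^{m,n}_N(t)=\det\big(\psi(t,q^{m-j+1}b_1,q^{n+i-1}b_3)\big)_{i,j=1}^N$. Column vectors of height $N$: $\widetilde\Psi_{m,n}(t)$ has $i$-th entry $\psi(t,q^{m-i+1}b_1,q^nb_3)$; $\check\Psi_{m,n}(t)$ has $i$-th entry $\psi(q^{-i+1}t,q^mb_1,q^nb_3)$; $\widehat\Psi_{m,n}(t)$ has $i$-th entry $\psi(q^{i-1}t,q^mb_1,q^nb_3)$ ($i=1,\dots,N$). *)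

From HB Require Import structures.
From mathcomp Require Import all_boot all_order all_algebra.
From mathcomp Require Import complex reals.
Set Implicit Arguments. Unset Strict Implicit. Unset Printing Implicit Defensive.
Import Order.TTheory GRing.Theory Num.Theory.
Local Open Scope ring_scope.

Section Defs.
Variable R : realType.
Local Notation C := R[i].

(* The four contiguity relations (R1)-(R4), required for all values of t, b1, b3. *)
Definition psi_relations (q : C) (psi : C -> C -> C -> C) : Prop :=
  forall t b1 b3 : C,
    [/\ psi (q * t) b1 b3 = b1 * psi t b1 b3 + (1 - b1) * psi (q * t) (b1 / q) b3,
        b3 * psi (q * t) b1 b3 = psi t b1 b3 + (b3 - 1) * psi t b1 (q * b3),
        q * t * b1 * b3 * psi (q * t) b1 b3
          = (q * t * b1 - 1) * psi t b1 b3 + psi t (q * b1) b3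
      & q * t * psi (q * t) b1 b3
          = (q * t * b1 - 1) * psi t b1 b3 + psi (q * t) b1 (b3 / q)].

(* Indices i, j : 'I_N are 0-based: the paper's row/column index is i+1, j+1. *)

Definition tau (q b1 b3 : C) (psi : C -> C -> C -> C) (N : nat) (m n : int) (t : C) : C :=
  \det (\matrix_(i < N, j < N)
          psi t (q ^ (m - (j : nat)%:Z) * b1) (q ^ (n + (i : nat)%:Z) * b3)).

Definition Psi_tilde (q b1 b3 : C) (psi : C -> C -> C -> C) (N : nat) (m n : int) (t : C)
  : 'cV[C]_N :=
  \col_(i < N) psi t (q ^ (m - (i : nat)%:Z) * b1) (q ^ n * b3).

Definition Psi_check (q b1 b3 : C) (psi : C -> C -> C -> C) (N : nat) (m n : int) (t : C)
  : 'cV[C]_N :=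
  \col_(i < N) psi (q ^ (- (i : nat)%:Z) * t) (q ^ m * b1) (q ^ n * b3).

Definition Psi_hat (q b1 b3 : C) (psi : C -> C -> C -> C) (N : nat) (m n : int) (t : C)
  : 'cV[C]_N :=
  \col_(i < N) psi (q ^ ((i : nat)%:Z) * t) (q ^ m * b1) (q ^ n * b3).

Definition M_tilde q b1 b3 psi N m n t : 'M[C]_N :=
  \matrix_(i < N, j < N) Psi_tilde q b1 b3 psi N m n (q ^+ j * t) i ord0.

Definition M_check q b1 b3 psi N m n t : 'M[C]_N :=
  \matrix_(i < N, j < N) Psi_check q b1 b3 psi N m (n + (j : nat)%:Z) t i ord0.

Definition M_hat q b1 b3 psi N m n t : 'M[C]_N :=
  \matrix_(i < N, j < N)
     Psi_hat q b1 b3 psi N m (n + (j : nat)%:Z) (q ^ (- (j : nat)%:Z) * t) i ord0.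

End Defs.

From HB Require Import structures.
From mathcomp Require Import all_boot all_order all_algebra.
From mathcomp Require Import complex reals.
From mathcomp Require Import ring zify.
Import Order.TTheory GRing.Theory Num.Theory.
Local Open Scope ring_scope.

(* All three identities are column reductions of a determinant.  With c_k = q^(n+k) b3,
   relation (R2) expresses psi(s, b, q c_k) through psi(s, b, c_k) and psi(q s, b, c_k),
   so the k-th column of the matrix of tau is (prod_(l<k) c_l/(c_l - 1)) Psi~(q^k t) plus a
   combination of the columns Psi~(q^a t), a < k: the change of basis is triangular.
   Relation (R1) plays the same game with b1 shifted down against t shifted down and gives
   the check form.  Finally (R2), read as c psi(q s, c) = psi(s, c) + (c - 1) psi(s, q c),
   relates the hat columns, rescaled by powers of the c_k, to the check matrix with its rows
   reversed through a unitriangular change of basis; the row reversal produces the sign. *)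

Section ColumnOperations.
Variables (F : fieldType) (N : nat).
Implicit Types (A B : 'M[F]_N) (v w : 'cV[F]_N).

Definition in_colspan B (P : pred nat) v :=
  exists2 u : 'cV[F]_N, v = B *m u & forall l : 'I_N, ~~ P l -> u l 0 = 0.

Lemma in_colspan0 B P : in_colspan B P 0.
Proof. by exists 0; [rewrite mulmx0 | move=> l _; rewrite mxE]. Qed.

Lemma in_colspanD B P v w :
  in_colspan B P v -> in_colspan B P w -> in_colspan B P (v + w).
Proof.
move=> [u -> Pu] [u' -> Pu']; exists (u + u'); first by rewrite mulmxDr.
by move=> l Pl; rewrite mxE Pu // Pu' // addr0.
Qed.

Lemma in_colspanZ B P a v : in_colspan B P v -> in_colspan B P (a *: v).
Proof.
move=> [u -> Pu]; exists (a *: u); first by rewrite scalemxAr.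
by move=> l Pl; rewrite mxE Pu // mulr0.
Qed.

Lemma sub_in_colspan B (P Q : pred nat) v :
  {subset P <= Q} -> in_colspan B P v -> in_colspan B Q v.
Proof.
move=> PQ [u -> Pu]; exists u => // l Ql; apply: Pu.
by apply: contra Ql; apply: PQ.
Qed.

Lemma in_colspan_col B (P : pred nat) (k : 'I_N) : P k -> in_colspan B P (col k B).
Proof.
move=> Pk; exists (delta_mx k 0); first by rewrite colE.
by move=> l Pl; rewrite mxE; case: eqP => // lk; rewrite lk Pk in Pl.
Qed.

Lemma colspan_factor A B (P : 'I_N -> pred nat) (d : 'I_N -> F) :
  (forall k, ~~ P k k) ->
  (forall k, in_colspan B (P k) (col k A - d k *: col k B)) ->
  exists U : 'M[F]_N,
    [/\ A = B *m U, forall k, U k k = d k & forall l k, l != k -> ~~ P k l -> U l k = 0].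
Proof.
move=> Pkk AB.
have [u Hu] : exists u : 'I_N -> 'cV[F]_N, forall k,
    col k A - d k *: col k B = B *m u k /\ forall l : 'I_N, ~~ P k l -> u k l 0 = 0.
  apply: (@fin_all_exists _ (fun=> 'cV[F]_N)
    (fun k u => col k A - d k *: col k B = B *m u /\ forall l : 'I_N, ~~ P k l -> u l 0 = 0)).
  by move=> k; have [u -> Pu] := AB k; exists u.
exists (\matrix_(l, k) (u k + d k *: delta_mx k 0) l 0); split.
- apply/matrixP => i k; have [Eu _] := Hu k.
  have /matrixP/(_ i 0) := congr1 (fun v => v + d k *: col k B) Eu.
  rewrite subrK [col k B]colE scalemxAr -mulmxDr !mxE => ->.
  by apply: eq_bigr => l _; rewrite !mxE.
- by move=> k; have [_ Pu] := Hu k; rewrite !mxE Pu // eqxx mulr1 add0r.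
- by move=> l k lk Pl; have [_ Pu] := Hu k; rewrite !mxE Pu // (negbTE lk) mulr0 addr0.
Qed.

Lemma det_colspan_upper A B (d : 'I_N -> F) :
  (forall k : 'I_N, in_colspan B (fun l => l < k)%N (col k A - d k *: col k B)) ->
  \det A = (\prod_k d k) * \det B.
Proof.
move=> AB; have [|U [-> Ud U0]] := @colspan_factor A B _ d _ AB.
  by move=> k; rewrite ltnn.
rewrite det_mulmx mulrC -det_tr det_trig; last first.
  apply/forallP => i; apply/forallP => j; apply/implyP => ij.
  rewrite mxE U0 //; first by rewrite neq_ltn ij orbT.
  by rewrite -leqNgt ltnW.
by congr (_ * _); apply: eq_bigr => k _; rewrite mxE Ud.
Qed.

Lemma det_colspan_lower A B :
  (forall k : 'I_N, in_colspan B (fun l => k < l)%N (col k A - col k B)) ->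
  \det A = \det B.
Proof.
move=> AB; have AB1 (k : 'I_N) : in_colspan B (fun l => k < l)%N (col k A - 1 *: col k B).
  by rewrite scale1r.
have [|U [-> Ud U0]] := @colspan_factor A B _ _ _ AB1; first by move=> k; rewrite ltnn.
rewrite det_mulmx [\det U]det_trig; first by rewrite big1 ?mulr1 // => k _; rewrite Ud.
apply/forallP => i; apply/forallP => j; apply/implyP => ij.
rewrite U0 //; first by rewrite neq_ltn ij.
by rewrite -leqNgt ltnW.
Qed.

Lemma det_two_term_recurrence (G : nat -> nat -> 'cV[F]_N) (al be : nat -> F) :
  (forall a k, G a k.+1 = al k *: G a.+1 k + be k *: G a k) ->
  \det (\matrix_(i < N, j < N) G 0%N j i 0)
    = (\prod_(k < N) \prod_(l < k) al l) * \det (\matrix_(i < N, j < N) G j 0%N i 0).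
Proof.
move=> GS; set B := \matrix_(i < N, j < N) G j 0%N i 0.
have colB (j : 'I_N) : G j 0%N = col j B by apply/matrixP => i k; rewrite !mxE ord1.
have reduced k a : (a + k < N)%N -> in_colspan B (fun l => l < a + k)%N
                  (G a k - (\prod_(l < k) al l) *: G (a + k)%N 0%N).
  elim: k a => [|k IH] a ltakN.
    by rewrite big_ord0 scale1r addn0 subrr; apply: in_colspan0.
  have ltakN' : (a + k < N)%N by apply: leq_trans ltakN; rewrite addnS.
  have -> : G a k.+1 - (\prod_(l < k.+1) al l) *: G (a + k.+1)%N 0%N
      = al k *: (G a.+1 k - (\prod_(l < k) al l) *: G (a.+1 + k)%N 0%N)
        + be k *: (G a k - (\prod_(l < k) al l) *: G (a + k)%N 0%N)
        + (be k * \prod_(l < k) al l) *: G (a + k)%N 0%N.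
    by rewrite GS big_ord_recr /= addSnnS; apply/matrixP => i j; rewrite !mxE; ring.
  apply: in_colspanD; first apply: in_colspanD.
  - by apply: in_colspanZ; rewrite -addSnnS; apply: IH; rewrite addSnnS.
  - apply: in_colspanZ; move: (IH _ ltakN'); apply: sub_in_colspan => l /= /ltn_trans.
    by apply; rewrite addnS.
  - apply: in_colspanZ; rewrite (colB (Ordinal ltakN')).
    by apply: in_colspan_col => /=; rewrite addnS.
apply: det_colspan_upper => k.
have -> : col k (\matrix_(i < N, j < N) G 0%N j i 0) = G 0%N k.
  by apply/matrixP => i j; rewrite !mxE ord1.
by have := reduced k 0%N; rewrite add0n (colB k); apply.
Qed.

Lemma det_unitriangular_recurrence (G : nat -> nat -> 'cV[F]_N) (ga : nat -> nat -> F) :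
  (forall p j, G p.+1 j = G p j + ga p j *: G p j.+1) ->
  \det (\matrix_(i < N, j < N) G (N.-1 - j)%N j i 0)
    = \det (\matrix_(i < N, j < N) G 0%N j i 0).
Proof.
move=> GS; set B := \matrix_(i < N, j < N) G 0%N j i 0.
have colB (j : 'I_N) : G 0%N j = col j B by apply/matrixP => i k; rewrite !mxE ord1.
have reduced p j : (j + p < N)%N -> in_colspan B (fun l => j < l)%N (G p j - G 0%N j).
  elim: p j => [|p IH] j ltjpN; first by rewrite subrr; apply: in_colspan0.
  have ltjN : (j.+1 < N)%N by lia.
  have -> : G p.+1 j - G 0%N j
      = (G p j - G 0%N j) + ga p j *: (G p j.+1 - G 0%N j.+1) + ga p j *: G 0%N j.+1.
    by rewrite GS; apply/matrixP => i k; rewrite !mxE; ring.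
  apply: in_colspanD; first apply: in_colspanD.
  - by apply: IH; lia.
  - apply: in_colspanZ; move: (IH j.+1); rewrite addSnnS => /(_ ltjpN).
    by apply: sub_in_colspan => l /= /(ltn_trans (ltnSn j)).
  - by apply: in_colspanZ; rewrite (colB (Ordinal ltjN)); apply: in_colspan_col => /=.
apply: det_colspan_lower => k.
have -> : col k (\matrix_(i < N, j < N) G (N.-1 - j)%N j i 0) = G (N.-1 - k)%N k.
  by apply/matrixP => i j; rewrite !mxE ord1.
by rewrite -colB; apply: reduced; have := ltn_ord k; lia.
Qed.

End ColumnOperations.

Section SignsAndProducts.
Variable F : fieldType.

Definition exchange_mx N : 'M[F]_N := \matrix_(i, j) ((i + j).+1 == N)%:R.

Lemma det_exchange_mx N : \det (exchange_mx N) = (-1) ^+ (N * (N - 1) %/ 2).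
Proof.
elim: N => [|N IH]; first by rewrite det_mx00.
rewrite (expand_det_row _ ord0) (bigD1 ord_max) //= big1; last first.
  move=> j /negbTE jN; rewrite !mxE /= add0n eqSS.
  by rewrite (_ : (j == N :> nat) = false) ?mul0r // -jN; apply/eqP/eqP => [/val_inj|->].
rewrite addr0 !mxE /= add0n eqxx mul1r /cofactor.
have -> : row' ord0 (col' ord_max (exchange_mx N.+1)) = exchange_mx N.
  by apply/matrixP => i j; rewrite !mxE /= /bump /= add1n leqNgt (ltn_ord j) add0n addSn.
rewrite IH -exprD add0n; congr (_ ^+ _).
rewrite (_ : (N.+1 * (N.+1 - 1) = N * (N - 1) + N.*2)%N); last by rewrite -muln2; nia.
by rewrite -muln2 divnDr ?dvdn_mull // mulnK // addnC.
Qed.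

Lemma exchange_mxE N (A : 'M[F]_N) : exchange_mx N *m A = \matrix_(i, j) A (rev_ord i) j.
Proof.
apply/matrixP => i j; rewrite !mxE (bigD1 (rev_ord i)) //= big1.
  rewrite !mxE /= (_ : (i + (N - i.+1)).+1 = N) ?eqxx ?mul1r ?addr0 //.
  by have := ltn_ord i; lia.
move=> k ki; rewrite !mxE; case: eqP => [ikN|]; last by rewrite mul0r.
by case/negP: ki; apply/eqP/val_inj => /=; have := ltn_ord i; lia.
Qed.

Lemma det_rev_rows N (A : 'M[F]_N) :
  \det (\matrix_(i, j) A (rev_ord i) j) = (-1) ^+ (N * (N - 1) %/ 2) * \det A.
Proof. by rewrite -exchange_mxE det_mulmx det_exchange_mx. Qed.

Lemma prod_pow_reindex (f g : nat -> F) N : (forall l, g l.+1 = f l) ->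
  \prod_(l < N) f l ^+ (N - l.+1) = \prod_(1 <= k < N) g k ^+ (N - k).
Proof.
case: N => [|N] gf; first by rewrite big_ord0 big_geq.
rewrite big_add1 /= big_mkord big_ord_recr /= subnn expr0 mulr1.
by apply: eq_bigr => i _; rewrite gf.
Qed.

Lemma prod_triangle (f g : nat -> F) N : (forall l, g l.+1 = f l) ->
  \prod_(k < N) \prod_(l < k) f l = \prod_(1 <= k < N) g k ^+ (N - k).
Proof.
move=> gf; rewrite -(prod_pow_reindex _ _ _ gf).
elim: N => [|N IH]; first by rewrite !big_ord0.
rewrite big_ord_recr /= IH [RHS]big_ord_recr /= subnn expr0 mulr1 -big_split /=.
by apply: eq_bigr => i _; rewrite -exprSr; congr (_ ^+ _); have := ltn_ord i; lia.
Qed.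

End SignsAndProducts.

Section ContiguityDeterminants.
Variable R : realType.
Local Notation C := R[i].
Variables (q b1 b3 : C) (psi : C -> C -> C -> C).
Hypothesis q_neq0 : q != 0.
Hypothesis b1_generic : forall j : int, q ^ j * b1 != 1.
Hypothesis b3_generic : forall j : int, q ^ j * b3 != 1.
Hypothesis psi_rel : psi_relations q psi.

Lemma mulq_pow (z w : int) (x : C) : w = z + 1 -> q * (q ^ z * x) = q ^ w * x.
Proof.
by move=> ->; rewrite exprzDr ?unitfE // expr1z mulrA [q * _]mulrC.
Qed.

Lemma psi_shift_b3 s b c :
  c != 1 -> psi s b (q * c) = (c * psi (q * s) b c - psi s b c) / (c - 1).
Proof.
move=> c_neq1; have [_ R2 _ _] := psi_rel s b c.
by rewrite R2; field; rewrite subr_eq0.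
Qed.

Lemma psi_shift_b1 s b c :
  b != 1 -> psi (q * s) (b / q) c = (psi (q * s) b c - b * psi s b c) / (1 - b).
Proof.
move=> b_neq1; have [R1 _ _ _] := psi_rel s b c.
by rewrite R1; field; rewrite subr_eq0 eq_sym.
Qed.

Lemma tau_M_tilde N m n t :
  tau q b1 b3 psi N m n t
    = (\prod_(1 <= k < N)
         ((q ^ (n + k%:Z - 1) * b3) / (q ^ (n + k%:Z - 1) * b3 - 1)) ^+ (N - k))
      * \det (M_tilde q b1 b3 psi N m n t).
Proof.
pose c l := q ^ (n + l%:Z) * b3.
rewrite -(@prod_triangle _ (fun l => c l / (c l - 1))); last first.
  by move=> l; rewrite /c (_ : n + l.+1%:Z - 1 = n + l%:Z) //; lia.
pose G a k := \col_(j < N) psi (q ^+ a * t) (q ^ (m - (j : nat)%:Z) * b1) (c k).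
have -> : M_tilde q b1 b3 psi N m n t = \matrix_(i < N, j < N) G j 0%N i 0.
  by apply/matrixP => i j; rewrite !mxE /c addr0.
rewrite /tau -det_tr (_ : _^T = \matrix_(i < N, j < N) G 0%N j i 0); last first.
  by apply/matrixP => i j; rewrite !mxE expr0 mul1r.
apply: (@det_two_term_recurrence _ N G (fun l => c l / (c l - 1)) (fun k => - (c k - 1)^-1)).
move=> a k; apply/matrixP => i j; rewrite !mxE /c.
rewrite -(@mulq_pow (n + k%:Z) (n + k.+1%:Z)); last lia.
rewrite psi_shift_b3 // mulrA -exprS.
by field; rewrite subr_eq0.
Qed.

Lemma tau_M_check N m n t :
  tau q b1 b3 psi N m n t
    = (\prod_(1 <= k < N)
         ((q ^ (m - k%:Z + 1) * b1) / (q ^ (m - k%:Z + 1) * b1 - 1)) ^+ (N - k))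
      * \det (M_check q b1 b3 psi N m n t).
Proof.
pose c l := q ^ (m - l%:Z) * b1.
rewrite -(@prod_triangle _ (fun l => c l / (c l - 1))); last first.
  by move=> l; rewrite /c (_ : m - l.+1%:Z + 1 = m - l%:Z) //; lia.
pose G a k := \col_(r < N) psi (q ^ (- a%:Z) * t) (c k) (q ^ (n + r%:Z) * b3).
rewrite -det_tr (_ : _^T = \matrix_(i < N, j < N) G j 0%N i 0); last first.
  by apply/matrixP => i j; rewrite !mxE /c subr0.
rewrite /tau (_ : \matrix_(i, j) _ = \matrix_(i < N, j < N) G 0%N j i 0); last first.
  by apply/matrixP => i j; rewrite !mxE oppr0 expr0z mul1r.
apply: (@det_two_term_recurrence _ N G (fun l => c l / (c l - 1)) (fun k => (1 - c k)^-1)).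
move=> a k; apply/matrixP => i j; rewrite !mxE.
have -> : c k.+1 = c k / q.
  by rewrite /c -(@mulq_pow (m - k.+1%:Z) (m - k%:Z)); [field | lia].
rewrite -[q ^ (- a%:Z) * t](@mulq_pow (- a.+1%:Z)); last lia.
rewrite psi_shift_b1; last exact: b1_generic.
by field; rewrite !subr_eq0 [1 == _]eq_sym b1_generic.
Qed.

Lemma det_M_check_hat N m n t :
  \det (M_check q b1 b3 psi N m n t)
    = (-1) ^+ (N * (N - 1) %/ 2)
      * (\prod_(1 <= k < N) (q ^ (n + k%:Z - 1) * b3) ^+ (N - k))
      * \det (M_hat q b1 b3 psi N m n t).
Proof.
rewrite -(@prod_pow_reindex _ (fun j => q ^ (n + j%:Z) * b3)); last first.
  by move=> l; rewrite (_ : n + l.+1%:Z - 1 = n + l%:Z) //; lia.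
(* The rescaling by (q^(n+j) b3)^p makes the coefficient of G p j in (R2) equal to 1. *)
pose G p j := (q ^ (n + j%:Z) * b3) ^+ p *:
  \col_(i < N) psi (q ^ (p%:Z - N.-1%:Z + (i : nat)%:Z) * t) (q ^ m * b1) (q ^ (n + j%:Z) * b3).
have -> : M_check q b1 b3 psi N m n t
    = \matrix_(i, j) (\matrix_(i, j < N) G 0%N j i 0) (rev_ord i) j.
  apply/matrixP => i j; rewrite !mxE expr0 mul1r.
  by congr (psi (q ^ _ * t)); rewrite /=; have := ltn_ord i; lia.
rewrite det_rev_rows -(@det_unitriangular_recurrence _ N G
  (fun p j => (q ^ (n + j%:Z) * b3 - 1) / q ^+ p)); last first.
  move=> p j; apply/matrixP => i k; rewrite !mxE.
  set c := q ^ (n + j%:Z) * b3.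
  have [_ R2 _ _] := psi_rel (q ^ (p%:Z - N.-1%:Z + (i : nat)%:Z) * t) (q ^ m * b1) c.
  rewrite (@mulq_pow _ (p.+1%:Z - N.-1%:Z + (i : nat)%:Z)) in R2; last lia.
  have -> : q ^ (n + j.+1%:Z) * b3 = q * c.
    by rewrite (@mulq_pow (n + j%:Z) (n + j.+1%:Z)) //; lia.
  rewrite exprS -mulrA [c * (_ * _)]mulrCA R2 [(q * c) ^+ p]exprMn.
  by field; rewrite expf_neq0.
rewrite -mulrA; congr (_ * _).
have -> : \matrix_(i, j < N) G (N.-1 - j)%N j i 0 = M_hat q b1 b3 psi N m n t
    *m diag_mx (\row_(j < N) (q ^ (n + (j : nat)%:Z) * b3) ^+ (N - j.+1)).
  rewrite mul_mx_diag; apply/matrixP => i j; rewrite !mxE mulrC.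
  rewrite (_ : (N.-1 - j = N - j.+1)%N); last by have := ltn_ord j; lia.
  congr (psi _ _ _ * _); rewrite mulrA -exprzDr ?unitfE //.
  by congr (q ^ _ * t); have := ltn_ord j; lia.
rewrite det_mulmx det_diag mulrC; congr (_ * _).
by apply: eq_bigr => j _; rewrite mxE.
Qed.

End ContiguityDeterminants.

Theorem lemmaA1 (R : realType) (q b1 b3 : R[i]) (psi : R[i] -> R[i] -> R[i] -> R[i])
  (hq : q != 0)
  (hb1 : forall j : int, q ^ j * b1 != 1)
  (hb3 : forall j : int, q ^ j * b3 != 1)
  (hpsi : psi_relations q psi)
  (N : nat) (m n : int) (t : R[i]) :
  (1 <= N)%N ->
  tau q b1 b3 psi N m n t
    = (\prod_(1 <= k < N)
         ((q ^ (n + k%:Z - 1) * b3) / (q ^ (n + k%:Z - 1) * b3 - 1)) ^+ (N - k))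
      * \det (M_tilde q b1 b3 psi N m n t)
  /\
  tau q b1 b3 psi N m n t
    = (\prod_(1 <= k < N)
         ((q ^ (m - k%:Z + 1) * b1) / (q ^ (m - k%:Z + 1) * b1 - 1)) ^+ (N - k))
      * \det (M_check q b1 b3 psi N m n t)
  /\
  tau q b1 b3 psi N m n t
    = (-1) ^+ ((N * (N - 1)) %/ 2)
      * (\prod_(1 <= k < N) (q ^ (n + k%:Z - 1) * b3) ^+ (N - k))
      * (\prod_(1 <= k < N)
         ((q ^ (m - k%:Z + 1) * b1) / (q ^ (m - k%:Z + 1) * b1 - 1)) ^+ (N - k))
      * \det (M_hat q b1 b3 psi N m n t).
Proof.
(* The identities hold for N = 0 as well. *)
move=> _; split; first exact: tau_M_tilde.
split; first exact: tau_M_check.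
by rewrite tau_M_check // det_M_check_hat //; ring.
Qed.
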